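(* Let $\mathbf v\in V$ be nonzero with $L_1\mathbf v=L_2\mathbf v=\mathbf 0$, $H_1\mathbf v=m_1\mathbf v$ and $H_2\mathbf v=m_2\mathbf v$. Then $L_3R_1^i\mathbf v=L_3R_2^j\mathbf v=\mathbf 0$ for all nonnegative integers $i,j$, and for all positive integers $i,j$: (i) $L_3R_1^iR_2^j\mathbf v=-ij(m_2-j+1)\,R_1^{i-1}R_2^{j-1}\mathbf v$; (ii) $L_3R_2^jR_1^i\mathbf v=ij(m_1-i+1)\,R_2^{j-1}R_1^{i-1}\mathbf v$.
   Context: Let $d\ge1$, $\mathbb F_3=\{0,1,2\}$, $X=\mathbb F_3^d$, and $V=\mathbb C^X$ with standard basis $\{\hat y:y\in X\}$. The type of $y\in X$ is $(r,s,t)$ where $r,s,t$ are the numbers of coordinates of $y$ equal to $0,1,2$ respectively ($r+s+t=d$). Define linear operators on $V$ by their action on basis vectors: $R_1\hat y$ is the sum of $\hat z$ over all $z$ obtained from $y$ by changing exactly one coordinate equal to $0$ into $1$ (an empty sum is $0$); similarly $R_2$ changes one coordinate $1\mapsto2$, $L_1$ changes one coordinate $1\mapsto 0$, $L_2$ changes one coordinate $2\mapsto1$, $L_3$ changes one coordinate $2\mapsto 0$. For $y$ of type $(r,s,t)$, $H_1\hat y=(r-s)\hat y$ and $H_2\hat y=(s-t)\hat y$. *)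

(* C is modelled by algC (algebraically closed field of
   characteristic 0 containing the algebraic complex numbers). *)
From HB Require Import structures.
From mathcomp Require Import all_boot all_order all_algebra.
From mathcomp Require Import algC.
Set Implicit Arguments. Unset Strict Implicit. Unset Printing Implicit Defensive.
Import Order.TTheory GRing.Theory Num.Theory.
Local Open Scope ring_scope.

(* F_3 = {0,1,2} as 'I_3 *)
Definition f0 : 'I_3 := @Ordinal 3 0 isT.
Definition f1 : 'I_3 := @Ordinal 3 1 isT.
Definition f2 : 'I_3 := @Ordinal 3 2 isT.

Notation X d := {ffun 'I_d -> 'I_3}.
Notation V d := {ffun X d -> algC^o}.

Definition basis d (y : X d) : V d := [ffun z => (z == y)%:R].

Definition upd d (y : X d) (k : 'I_d) (b : 'I_3) : X d :=
  [ffun l => if l == k then b else y l].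

Definition step_basis d (a b : 'I_3) (y : X d) : V d :=
  \sum_(k : 'I_d | y k == a) basis (upd y k b).

Definition step d (a b : 'I_3) (v : V d) : V d :=
  \sum_(y : X d) v y *: step_basis a b y.

Definition R1 d := @step d f0 f1.
Definition R2 d := @step d f1 f2.
Definition L1 d := @step d f1 f0.
Definition L2 d := @step d f2 f1.
Definition L3 d := @step d f2 f0.

Definition cnt d (y : X d) (a : 'I_3) : nat := #|[set k | y k == a]|.

Definition H1 d (v : V d) : V d :=
  [ffun y => ((cnt y f0)%:R - (cnt y f1)%:R) * v y].
Definition H2 d (v : V d) : V d :=
  [ffun y => ((cnt y f1)%:R - (cnt y f2)%:R) * v y].

From HB Require Import structures.
From mathcomp Require Import all_boot all_order all_algebra.
From mathcomp Require Import algC.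
From mathcomp Require Import ring.
Set Implicit Arguments. Unset Strict Implicit. Unset Printing Implicit Defensive.
Import Order.TTheory GRing.Theory Num.Theory.
Local Open Scope ring_scope.

(* [step a b] acts on V = (C^3)^(x)d as the matrix unit E_ba of gl_3, so these operators
   obey the gl_3 commutation relations, and (R1, L1, H1), (R2, L2, H2) are sl_2-triples.
   Hence L3 = [L1, L2] kills v, while L3 commutes with R1 up to -L2 and with R2 up to L1,
   which in turn commute with R1 resp. R2.  So L3 R1^i R2^j v = -i R1^(i-1) L2 R2^j v, and
   L2 R2^j v = j (m2 - j + 1) R2^(j-1) v is the usual sl_2 computation on a highest
   weight vector; (ii) is symmetric. *)

Section RaisingOperator.
Variables (R : comPzRingType) (W : lmodType R) (Q : {linear W -> W}).

Lemma iter_linear0 n : iter n Q 0 = 0.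
Proof. by elim: n => //= n ->; rewrite linear0. Qed.

Lemma iter_linearN n x : iter n Q (- x) = - iter n Q x.
Proof. by elim: n => //= n ->; rewrite linearN. Qed.

Lemma iter_linearZ n k x : iter n Q (k *: x) = k *: iter n Q x.
Proof. by elim: n => //= n ->; rewrite linearZZ. Qed.

Lemma scaler_nat_iter_pred n x : n%:R *: Q (iter n.-1 Q x) = n%:R *: iter n Q x.
Proof. by case: n => [|n] //; rewrite !scale0r. Qed.

Lemma commutator_iter (P D : W -> W) :
    (forall x, P (Q x) = Q (P x) + D x) -> (forall x, D (Q x) = Q (D x)) ->
  forall n x, P (iter n Q x) = iter n Q (P x) + n%:R *: iter n.-1 Q (D x).
Proof.
move=> PQ DQ; have DQn n x : D (iter n Q x) = iter n Q (D x).
  by elim: n => //= n IH; rewrite DQ IH.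
elim=> [|n IH] x /=; first by rewrite scale0r addr0.
rewrite PQ IH linearD linearZZ scaler_nat_iter_pred DQn -addrA -[in RHS]natr1.
by rewrite scalerDl scale1r [_ + iter _ _ _]addrC.
Qed.

Lemma weight_iter (H : W -> W) v mu :
    (forall x, H (Q x) = Q (H x) - 2 *: Q x) -> H v = mu *: v ->
  forall m, H (iter m Q v) = (mu - 2 * m%:R) *: iter m Q v.
Proof.
move=> HQ Hv; elim=> [|m IH] /=; first by rewrite mulr0 subr0.
by rewrite HQ IH linearZZ -scalerBl; congr (_ *: _); rewrite -natr1; ring.
Qed.

Lemma lowering_iter (L H : W -> W) v mu :
    (forall x, L (Q x) = Q (L x) + H x) ->
    (forall x, H (Q x) = Q (H x) - 2 *: Q x) ->
    H v = mu *: v -> L v = 0 ->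
  forall n, L (iter n Q v) = (n%:R * (mu - n%:R + 1)) *: iter n.-1 Q v.
Proof.
move=> LQ HQ Hv Lv; elim=> [|n IH] /=; first by rewrite Lv mul0r scale0r.
rewrite LQ IH (weight_iter HQ Hv) linearZZ [_ * (mu - _ + _)]mulrC.
rewrite -[(_ * _) *: Q _]scalerA scaler_nat_iter_pred scalerA -scalerDl.
by congr (_ *: _); rewrite -natr1; ring.
Qed.

End RaisingOperator.

Section Coordinates.
Variable d : nat.
Implicit Types (y z : X d) (k l : 'I_d) (a b c e : 'I_3) (v w : V d).

Lemma upd_same y k b : upd y k b k = b.
Proof. by rewrite ffunE eqxx. Qed.

Lemma upd_other y k l b : l != k -> upd y k b l = y l.
Proof. by rewrite ffunE => /negbTE ->. Qed.

Lemma upd_upd y k a b : upd (upd y k a) k b = upd y k b.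
Proof. by apply/ffunP=> l; rewrite !ffunE; case: eqP. Qed.

Lemma upd_id y k : upd y k (y k) = y.
Proof. by apply/ffunP=> l; rewrite !ffunE; case: eqP => // ->. Qed.

Lemma updC y k l a b : k != l -> upd (upd y k a) l b = upd (upd y l b) k a.
Proof.
move=> nkl; apply/ffunP=> m; rewrite !ffunE.
by case: (eqVneq m l) => [->|//]; rewrite eq_sym (negbTE nkl).
Qed.

Lemma stepE a b v z : step a b v z = \sum_(k | z k == b) v (upd z k a).
Proof.
rewrite /step sum_ffunE.
under eq_bigr do rewrite ffunE /step_basis sum_ffunE scaler_sumr big_mkcond.
rewrite exchange_big /= [RHS]big_mkcond; apply: eq_bigr => k _.
have [zkb|zkb] := eqVneq (z k) b; last first.
  apply: big1 => y _; case: ifP => // _; rewrite !ffunE.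
  case: eqP => [Ez|_]; last by rewrite scaler0.
  by rewrite Ez upd_same eqxx in zkb.
rewrite (bigD1 (upd z k a)) //= upd_same eqxx big1 ?addr0.
  by rewrite !ffunE upd_upd -zkb upd_id eqxx; exact: mulr1.
move=> y nyz; case: ifP => // /eqP yka; rewrite !ffunE.
case: eqP => [Ez|_]; last by rewrite scaler0.
by rewrite Ez upd_upd -yka upd_id eqxx in nyz.
Qed.

Lemma step_is_linear a b : linear (@step d a b).
Proof.
move=> c v w; apply/ffunP=> z; rewrite !ffunE !stepE scaler_sumr -big_split.
by apply: eq_bigr => k _; rewrite !ffunE.
Qed.

HB.instance Definition _ a b :=
  GRing.isLinear.Build algC (V d) (V d) *:%R (@step d a b) (step_is_linear a b).

Lemma step_diag a v z : step a a v z = (cnt z a)%:R * v z.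
Proof.
rewrite stepE (eq_bigr (fun _ => v z)) => [|k /eqP <-]; last by rewrite upd_id.
by rewrite sumr_const /cnt cardsE mulr_natl.
Qed.

Lemma H1_step v : H1 v = step f0 f0 v - step f1 f1 v.
Proof. by apply/ffunP=> z; rewrite !ffunE !step_diag mulrBl. Qed.

Lemma H2_step v : H2 v = step f1 f1 v - step f2 f2 v.
Proof. by apply/ffunP=> z; rewrite !ffunE !step_diag mulrBl. Qed.

Definition step_cross a b c e v z : algC^o :=
  \sum_k \sum_l
    (if [&& l != k, z k == b & z l == e] then v (upd (upd z k a) l c) else 0).

(* Two successive one-coordinate changes either hit the same coordinate, which is only
   possible when e = a and amounts to the single change c -> b, or two distinct ones. *)
Lemma step_stepE a b c e v z :
  step a b (step c e v) z = (a == e)%:R *: step c b v z + step_cross a b c e v z.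
Proof.
rewrite stepE stepE scaler_sumr /step_cross big_mkcond [S in _ = S + _]big_mkcond.
rewrite /= -big_split.
apply: eq_bigr => k _ /=; rewrite stepE big_mkcond (bigD1 k) //= upd_same upd_upd.
have [zkb|_] := eqVneq (z k) b; last by rewrite add0r big1 // => l _; rewrite andbF.
congr (_ + _); first by case: (a == e); rewrite ?scale1r ?scale0r.
rewrite big_mkcond; apply: eq_bigr => l _.
by case: (eqVneq l k) => //= nlk; rewrite upd_other.
Qed.

Lemma step_crossC a b c e v z : step_cross a b c e v z = step_cross c e a b v z.
Proof.
rewrite /step_cross exchange_big; apply: eq_bigr => k _; apply: eq_bigr => l _.
case: (eqVneq l k) => [->|nlk] //=; rewrite andbC.
by case: ifP => // _; rewrite updC.
Qed.

Lemma step_comm a b c e v :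
  step a b (step c e v) =
  step c e (step a b v) + (a == e)%:R *: step c b v - (c == b)%:R *: step a e v.
Proof.
apply/ffunP=> z; rewrite !ffunE !step_stepE step_crossC.
by rewrite addrAC [(c == b)%:R *: _ + _]addrC addrK addrC.
Qed.

HB.instance Definition _ := GRing.Linear.copy (@R1 d) (@step d f0 f1).
HB.instance Definition _ := GRing.Linear.copy (@R2 d) (@step d f1 f2).
HB.instance Definition _ := GRing.Linear.copy (@L1 d) (@step d f1 f0).
HB.instance Definition _ := GRing.Linear.copy (@L2 d) (@step d f2 f1).

Section Relations.
Implicit Type x : V d.

Lemma L3_R1 x : L3 (R1 x) = R1 (L3 x) - L2 x.
Proof. by rewrite /L3 /R1 step_comm -[f2 == f1]/false eqxx scale0r scale1r addr0. Qed.

Lemma L2_R1 x : L2 (R1 x) = R1 (L2 x).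
Proof.
by rewrite /L2 /R1 step_comm -[f2 == f1]/false -[f0 == f1]/false !scale0r addr0 subr0.
Qed.

Lemma L3_R2 x : L3 (R2 x) = R2 (L3 x) + L1 x.
Proof. by rewrite /L3 /R2 step_comm -[f1 == f0]/false eqxx scale0r scale1r subr0. Qed.

Lemma L1_R2 x : L1 (R2 x) = R2 (L1 x).
Proof.
by rewrite /L1 /R2 step_comm -[f1 == f2]/false -[f1 == f0]/false !scale0r addr0 subr0.
Qed.

Lemma L1_R1 x : L1 (R1 x) = R1 (L1 x) + H1 x.
Proof. by rewrite /L1 /R1 step_comm !eqxx !scale1r H1_step addrA. Qed.

Lemma L2_R2 x : L2 (R2 x) = R2 (L2 x) + H2 x.
Proof. by rewrite /L2 /R2 step_comm !eqxx !scale1r H2_step addrA. Qed.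

Lemma H1_R1 x : H1 (R1 x) = R1 (H1 x) - 2 *: R1 x.
Proof.
rewrite !H1_step linearB /R1 (step_comm f0 f0) (step_comm f1 f1) -[f0 == f1]/false.
rewrite !eqxx !scale0r !scale1r addr0 subr0 opprD addrACA -opprD.
by rewrite -[2]/(2%:R) scaler_nat mulr2n.
Qed.

Lemma H2_R2 x : H2 (R2 x) = R2 (H2 x) - 2 *: R2 x.
Proof.
rewrite !H2_step linearB /R2 (step_comm f1 f1) (step_comm f2 f2) -[f1 == f2]/false.
rewrite !eqxx !scale0r !scale1r addr0 subr0 opprD addrACA -opprD.
by rewrite -[2]/(2%:R) scaler_nat mulr2n.
Qed.

Lemma L3_L1L2 x : L3 x = L1 (L2 x) - L2 (L1 x).
Proof.
by rewrite /L1 /L2 step_comm -[f2 == f0]/false eqxx scale0r scale1r subr0 addrC addKr.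
Qed.

Lemma L3_iter_R1 n x :
  L3 (iter n (@R1 d) x) = iter n (@R1 d) (L3 x) + n%:R *: iter n.-1 (@R1 d) (- L2 x).
Proof.
apply: (commutator_iter (D := fun x => - L2 x)) => y; first exact: L3_R1.
by rewrite L2_R1 linearN.
Qed.

Lemma L3_iter_R2 n x :
  L3 (iter n (@R2 d) x) = iter n (@R2 d) (L3 x) + n%:R *: iter n.-1 (@R2 d) (L1 x).
Proof. exact: commutator_iter L3_R2 L1_R2 n x. Qed.

End Relations.

Section HighestWeightVector.
Variables (v : V d) (m1 m2 : algC).
Hypotheses (L1v : L1 v = 0) (L2v : L2 v = 0).
Hypotheses (H1v : H1 v = m1 *: v) (H2v : H2 v = m2 *: v).

Lemma L3_highest : L3 v = 0.
Proof. by rewrite L3_L1L2 L1v L2v !linear0 addr0. Qed.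

Lemma L3_R1_highest i : L3 (iter i (@R1 d) v) = 0.
Proof. by rewrite L3_iter_R1 L3_highest L2v oppr0 !iter_linear0 scaler0 addr0. Qed.

Lemma L3_R2_highest j : L3 (iter j (@R2 d) v) = 0.
Proof. by rewrite L3_iter_R2 L3_highest L1v !iter_linear0 scaler0 addr0. Qed.

Lemma L1_R1_highest i :
  L1 (iter i (@R1 d) v) = (i%:R * (m1 - i%:R + 1)) *: iter i.-1 (@R1 d) v.
Proof. exact: lowering_iter L1_R1 H1_R1 H1v L1v i. Qed.

Lemma L2_R2_highest j :
  L2 (iter j (@R2 d) v) = (j%:R * (m2 - j%:R + 1)) *: iter j.-1 (@R2 d) v.
Proof. exact: lowering_iter L2_R2 H2_R2 H2v L2v j. Qed.

End HighestWeightVector.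
End Coordinates.

Theorem lemma2p9 (d : nat) (hd : (0 < d)%N) (v : V d) (m1 m2 : algC) :
  v != 0 ->
  L1 v = 0 -> L2 v = 0 ->
  H1 v = m1 *: v -> H2 v = m2 *: v ->
  (forall i : nat, L3 (iter i (@R1 d) v) = 0) /\
  (forall j : nat, L3 (iter j (@R2 d) v) = 0) /\
  (forall i j : nat, (0 < i)%N -> (0 < j)%N ->
     L3 (iter i (@R1 d) (iter j (@R2 d) v))
       = - ((i * j)%:R * (m2 - j%:R + 1)) *: iter i.-1 (@R1 d) (iter j.-1 (@R2 d) v)) /\
  (forall i j : nat, (0 < i)%N -> (0 < j)%N ->
     L3 (iter j (@R2 d) (iter i (@R1 d) v))
       = ((i * j)%:R * (m1 - i%:R + 1)) *: iter j.-1 (@R2 d) (iter i.-1 (@R1 d) v)).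
Proof.
move=> _ L1v L2v H1v H2v.
split; first exact: L3_R1_highest L1v L2v.
split; first exact: L3_R2_highest L1v L2v.
split=> i j _ _.
  rewrite L3_iter_R1 (L3_R2_highest L1v L2v) iter_linear0 add0r (L2_R2_highest L2v H2v).
  rewrite scaleNr iter_linearN iter_linearZ scalerN scalerA.
  by congr (- (_ *: _)); rewrite natrM; ring.
rewrite L3_iter_R2 (L3_R1_highest L1v L2v) iter_linear0 add0r (L1_R1_highest L1v H1v).
by rewrite iter_linearZ scalerA natrM; congr (_ *: _); ring.
Qed.
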